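(* Let $(\Omega,\Sigma,\mu)$ be a finite measure space and let $X(\mu)$ be a Banach strictly rectangular function space with the subsequence property. Then: (i) If $h\in L^\infty(\mu)$ and $f\in X(\mu)$, then $hf\in X(\mu)$, $\||hf|\|\le\|h\|_\infty\||f|\|$ and $\|hf\|\le 4\|h\|_\infty\|f\|$. (ii) $X(\mu)$ is an ideal in $L^0(\mu)$: if $f\in L^0(\mu)$, $g\in X(\mu)$ and $|f|\le|g|$, then $f\in X(\mu)$. (iii) The norm of $X(\mu)$ is monotone, i.e. there is $C>0$ with $\|f\|\le C\|g\|$ whenever $f,g\in X(\mu)$, $0\le f\le g$; for such $C$, $\||g|-|h|\|\le 4C\|g-h\|$ for all $g,h\in X(\mu)$; and the map $V:X(\mu)\to X(\mu)$, $V(f)=|f|$, is continuous. (iv) $\|f\|_V:=\||f|\|$, $f\in X(\mu)$, defines a norm on $X(\mu)$ equivalent to $\|\cdot\|$, which coincides with $\|\cdot\|$ on $X(\mu)^+=\{f\in X(\mu):f\ge0\}$, and $(X(\mu),\|\cdot\|_V)$ is a Banach function space.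
   Context: $L^0(\mu)$ is the space of equivalence classes (modulo $\mu$-a.e. equality) of real $\Sigma$-measurable functions, ordered $\mu$-a.e. A Banach strictly rectangular function space is a vector subspace $X(\mu)\subseteq L^0(\mu)$ with a complete norm such that $\chi_Af\in X(\mu)$ and $\|\chi_Af\|\le\|f\|$ for all $f\in X(\mu)$, $A\in\Sigma$. Subsequence property: whenever $f_n,f\in X(\mu)$ and $f_n\to f$ in norm, some subsequence converges to $f$ $\mu$-a.e. A Banach function space is a vector subspace of $L^0(\mu)$ with a complete norm which is an ideal of $L^0(\mu)$ (if $f\in L^0(\mu)$, $g$ in the space, $|f|\le|g|$, then $f$ is in the space) and whose norm is a Riesz norm ($|f|\le|g|$ implies $\|f\|\le\|g\|$). *)

From HB Require Import structures.
From mathcomp Require Import all_boot all_order all_algebra.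
From mathcomp Require Import all_classical all_reals all_analysis.
Set Implicit Arguments. Unset Strict Implicit. Unset Printing Implicit Defensive.
Import Order.TTheory GRing.Theory Num.Theory.
Import numFieldNormedType.Exports.
Local Open Scope classical_set_scope.
Local Open Scope ring_scope.

(* L^0(mu) is modelled by (measurable) representatives f : T -> R, with all
   notions taken modulo mu-a.e. equality.  A function space is given by a
   carrier predicate Xs on representatives (closed under a.e. equality) and a
   norm nrm which only depends on the a.e.-class. *)
Section FunctionSpaces.
Context {d : measure_display} {T : measurableType d} {R : realType}.
Variable mu : {measure set T -> \bar R}.

Definition L0 (f : T -> R) : Prop := measurable_fun [set: T] f.

Definition aeq (f g : T -> R) : Prop := \forall x \ae mu, f x = g x.
Definition ale (f g : T -> R) : Prop := \forall x \ae mu, f x <= g x.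

Definition vector_subspace_L0 (Xs : set (T -> R)) : Prop :=
  [/\ forall f, Xs f -> L0 f,
      forall f g, Xs f -> L0 g -> aeq f g -> Xs g,
      Xs (fun _ => 0),
      forall f g, Xs f -> Xs g -> Xs (fun x => f x + g x) &
      forall (a : R) f, Xs f -> Xs (fun x => a * f x)].

Definition is_norm_on (Xs : set (T -> R)) (nrm : (T -> R) -> R) : Prop :=
  [/\ forall f g, Xs f -> Xs g -> aeq f g -> nrm f = nrm g,
      forall f, Xs f -> 0 <= nrm f,
      forall f, Xs f -> (nrm f = 0 <-> aeq f (fun _ => 0)),
      forall (a : R) f, Xs f -> nrm (fun x => a * f x) = `|a| * nrm f &
      forall f g, Xs f -> Xs g -> nrm (fun x => f x + g x) <= nrm f + nrm g].

Definition complete_for (Xs : set (T -> R)) (nrm : (T -> R) -> R) : Prop :=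
  forall u : nat -> T -> R, (forall n, Xs (u n)) ->
    (forall e : R, 0 < e -> exists N : nat, forall m n : nat, (N <= m)%N -> (N <= n)%N ->
        nrm (fun x => u m x - u n x) < e) ->
    exists f, Xs f /\ (fun n => nrm (fun x => u n x - f x)) @ \oo --> (0 : R).

Definition banach_subspace_L0 Xs nrm : Prop :=
  [/\ vector_subspace_L0 Xs, is_norm_on Xs nrm & complete_for Xs nrm].

Definition strictly_rectangular (Xs : set (T -> R)) (nrm : (T -> R) -> R) : Prop :=
  forall f (A : set T), Xs f -> measurable A ->
    Xs (fun x => \1_A x * f x) /\ nrm (fun x => \1_A x * f x) <= nrm f.

Definition banach_strictly_rectangular Xs nrm : Prop :=
  banach_subspace_L0 Xs nrm /\ strictly_rectangular Xs nrm.

Definition subsequence_property (Xs : set (T -> R)) (nrm : (T -> R) -> R) : Prop :=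
  forall (u : nat -> T -> R) (f : T -> R), (forall n, Xs (u n)) -> Xs f ->
    (fun n => nrm (fun x => u n x - f x)) @ \oo --> (0 : R) ->
    exists phi : nat -> nat, (forall n, (phi n < phi n.+1)%N) /\
      \forall x \ae mu, (fun n => u (phi n) x) @ \oo --> f x.

Definition ideal_L0 (Xs : set (T -> R)) : Prop :=
  forall f g, L0 f -> Xs g -> ale (fun x => `|f x|) (fun x => `|g x|) -> Xs f.

Definition riesz_norm (Xs : set (T -> R)) (nrm : (T -> R) -> R) : Prop :=
  forall f g, Xs f -> Xs g -> ale (fun x => `|f x|) (fun x => `|g x|) -> nrm f <= nrm g.

Definition banach_function_space Xs nrm : Prop :=
  [/\ banach_subspace_L0 Xs nrm, ideal_L0 Xs & riesz_norm Xs nrm].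

Definition Linf (h : T -> R) : Prop :=
  L0 h /\ (Lnorm mu +oo%E (EFin \o h) < +oo)%E.
Definition Linf_norm (h : T -> R) : R := fine (Lnorm mu +oo%E (EFin \o h)).

Definition monotone_with (Xs : set (T -> R)) (nrm : (T -> R) -> R) (C : R) : Prop :=
  forall f g, Xs f -> Xs g -> ale (fun _ => 0) f -> ale f g -> nrm f <= C * nrm g.

End FunctionSpaces.

From HB Require Import structures.
From mathcomp Require Import all_boot all_order all_algebra.
From mathcomp Require Import all_classical all_reals all_analysis.
From mathcomp Require Import measurable_realfun ess_sup_inf.
From mathcomp Require Import ring lra.

(* The heart of the matter is that multiplication by a measurable s with
   0 <= s <= 1 does not increase the norm.  Expand s greedily in binary,
   s = \sum_n 2^-(n+1) 1_{A_n}.  By strict rectangularity the partial sums of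
   \sum_n 2^-(n+1) 1_{A_n} f have norm at most ||f||, and the block of terms
   from n on has norm at most 2^-n ||f||; so they form a Cauchy sequence, and
   the subsequence property identifies its norm limit a.e. with the pointwise
   limit s f.  Splitting a multiplier |s| <= 1 into positive and negative
   parts costs a factor 2; writing f = (f / g) g for |f| <= |g| then gives the
   ideal property with constant 2 and, for 0 <= f <= g, monotonicity with
   constant 1.  All the assertions follow, with constants better than the
   ones stated. *)

Set Implicit Arguments. Unset Strict Implicit. Unset Printing Implicit Defensive.
Import Order.TTheory GRing.Theory Num.Theory.
Import numFieldNormedType.Exports.
Local Open Scope classical_set_scope.
Local Open Scope ring_scope.

Section RealPreliminaries.
Variable R : realType.

Lemma halfpow_ge0 n : 0 <= (2^-1 : R) ^+ n.
Proof. by rewrite exprn_ge0 // invr_ge0. Qed.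

Lemma cvg_halfpow : (2^-1 : R) ^+ n @[n --> \oo] --> 0.
Proof. by apply: cvg_expr; rewrite ger0_norm ?invr_ge0 // invf_lt1 // ltr1n. Qed.

Lemma measurable_inv : measurable_fun setT (@GRing.inv R).
Proof.
rewrite -(setvU [set (0 : R)]); apply/measurable_funU.
- by apply: measurableC; exact: measurable_set1.
- exact: measurable_set1.
split.
- apply: open_continuous_measurable_fun.
    exact/closed_openC/accessible_closed_set1/hausdorff_accessible/Rhausdorff.
  by move=> x /set_mem x0; apply: inv_continuous; exact/eqP.
- apply: (eq_measurable_fun (fun _ : R => 0 : R)); last exact: measurable_cst.
  by move=> x /set_mem /= ->; rewrite invr0.
Qed.

Lemma cvg_increasing_nat (phi : nat -> nat) :
  (forall n, (phi n < phi n.+1)%N) -> phi @ \oo --> \oo.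
Proof.
move=> phiS; have phi_ge n : (n <= phi n)%N.
  by elim: n => [//|n IH]; exact: leq_ltn_trans IH (phiS n).
by move=> P [N _ PN]; exists N => // n /= Nn; apply: PN; exact: leq_trans Nn _.
Qed.

Lemma divfK_norm_le (a b : R) : `|a| <= `|b| -> a / b * b = a.
Proof.
have [-> | b0 _] := eqVneq b 0; last exact: divfK.
by rewrite normr0 normr_le0 => /eqP ->; rewrite !mul0r.
Qed.

Lemma norm_div_le1 (a b : R) : `|a| <= `|b| -> `|a / b| <= 1.
Proof.
rewrite normrM normfV; have [-> | b0 ab] := eqVneq b 0; first by rewrite normr0 invr0 mulr0.
by rewrite ler_pdivrMr ?normr_gt0 // mul1r.
Qed.

Lemma div_unit_interval (a b : R) : 0 <= a <= b -> 0 <= a / b <= 1.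
Proof.
case/andP=> a0 ab; have [-> | b0] := eqVneq b 0; first by rewrite invr0 mulr0 lexx ler01.
have b_gt0 : 0 < b by rewrite lt_neqAle eq_sym b0 (le_trans a0 ab).
by rewrite divr_ge0 ?(ltW b_gt0) //= ler_pdivrMr // mul1r.
Qed.

End RealPreliminaries.

Section DyadicExpansion.
Context d (T : measurableType d) (R : realType).

(* The remainder after n greedy binary digits:
   s = \sum_(k < n) 2^-(k+1) \1_(dyadic_set s k) + dyadic_rem s n. *)
Fixpoint dyadic_rem (s : T -> R) (n : nat) : T -> R :=
  match n with
  | 0 => s
  | m.+1 => fun x =>
      dyadic_rem s m x - (2^-1) ^+ n * \1_[set y | (2^-1) ^+ n <= dyadic_rem s m y] x
  end.

Definition dyadic_set (s : T -> R) n := [set y | (2^-1) ^+ n.+1 <= dyadic_rem s n y].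

Lemma dyadic_remS s n x :
  dyadic_rem s n.+1 x = dyadic_rem s n x - (2^-1) ^+ n.+1 * \1_(dyadic_set s n) x.
Proof. by []. Qed.

Lemma measurable_superlevel_set (g : T -> R) a :
  measurable_fun setT g -> measurable [set y | a <= g y].
Proof.
move=> mg; have -> : [set y | a <= g y] = setT `&` g @^-1` `[a, +oo[.
  by apply/seteqP; split => x /=; rewrite in_itv /= andbT => // -[].
by apply: mg => //; exact: measurable_itv.
Qed.

Lemma measurable_dyadic_rem s n :
  measurable_fun setT s -> measurable_fun setT (dyadic_rem s n).
Proof.
move=> ms; elim: n => [//|n IH] /=.
apply/(measurable_funB IH)/measurable_funM; first exact: measurable_cst.
exact/measurable_indic/measurable_superlevel_set.
Qed.

Lemma measurable_dyadic_set s n : measurable_fun setT s -> measurable (dyadic_set s n).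
Proof. by move=> ms; exact/measurable_superlevel_set/measurable_dyadic_rem. Qed.

Lemma dyadic_rem_bound s n x :
  0 <= s x <= 1 -> 0 <= dyadic_rem s n x <= (2^-1) ^+ n.
Proof.
move=> s01; elim: n => [|n IH]; first by rewrite expr0.
have halfS : (2^-1 : R) ^+ n.+1 = (2^-1) ^+ n / 2 by rewrite exprSr.
rewrite dyadic_remS indicE; case/andP: IH.
have [ha | ha] := leP ((2^-1) ^+ n.+1) (dyadic_rem s n x).
  by rewrite (mem_set (ha : dyadic_set s n x)) mulr1 => *; apply/andP; split; lra.
rewrite memNset ?mulr0 => *; first by apply/andP; split; lra.
by rewrite /dyadic_set /= leNgt ha.
Qed.

Lemma cvg_dyadic_rem s x :
  0 <= s x <= 1 -> dyadic_rem s n x @[n --> \oo] --> 0.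
Proof.
move=> s01; apply: (squeeze_cvgr _ (cvg_cst 0) (@cvg_halfpow R)).
by apply: nearW => n; exact: dyadic_rem_bound.
Qed.

End DyadicExpansion.

Section MeasurableFunctions.
Context d (T : measurableType d) (R : realType) (mu : {measure set T -> \bar R}).

Lemma L0_abs (f : T -> R) : L0 f -> L0 (fun x => `|f x|).
Proof. exact: measurableT_comp. Qed.

Lemma L0_div (f g : T -> R) : L0 f -> L0 g -> L0 (fun x => f x / g x).
Proof. by move=> mf mg; exact/(measurable_funM mf)/(measurableT_comp (@measurable_inv R)). Qed.

Lemma Linf_norm_bound h : Linf mu h ->
  0 <= Linf_norm mu h /\ \forall x \ae mu, `|h x| <= Linf_norm mu h.
Proof.
rewrite /Linf /Linf_norm unlock /= => -[mh]; case: ifPn => [mu_gt0 | mu_le0 _].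
  set E := ess_sup _ _ => E_fin.
  have E0 : (0 <= E)%E by apply: ess_sup_gee => //; apply: nearW => x /=; rewrite lee_fin.
  have E_fine : E = (fine E)%:E by rewrite fineK // ge0_fin_numE.
  split; first exact: fine_ge0.
  apply: filterS (ess_sup_ge mu (abse \o (EFin \o h))) => x /=.
  by rewrite -/E {1}E_fine lee_fin.
have mu0 : mu setT = 0 by apply/eqP; rewrite eq_le measure_ge0 andbT leNgt.
by split=> //; exists setT.
Qed.

End MeasurableFunctions.

Section StrictlyRectangularSpace.
Context d (T : measurableType d) (R : realType) (mu : {measure set T -> \bar R}).
Variables (Xs : set (T -> R)) (nrm : (T -> R) -> R).
Hypothesis HX : banach_subspace_L0 mu Xs nrm.

Lemma mem_L0 f : Xs f -> L0 f.
Proof. by case: HX => [[H _ _ _ _] _ _]; exact: H. Qed.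

Lemma mem0 : Xs (fun => 0).
Proof. by case: HX => [[_ _ H _ _] _ _]; exact: H. Qed.

Lemma memD f g : Xs f -> Xs g -> Xs (fun x => f x + g x).
Proof. by case: HX => [[_ _ _ H _] _ _]; exact: H. Qed.

Lemma memZ a f : Xs f -> Xs (fun x => a * f x).
Proof. by case: HX => [[_ _ _ _ H] _ _]; exact: H. Qed.

Lemma memB f g : Xs f -> Xs g -> Xs (fun x => f x - g x).
Proof.
move=> Xf Xg; have -> : (fun x => f x - g x) = (fun x => f x + -1 * g x).
  by apply: funext => x; rewrite mulN1r.
exact/memD/memZ.
Qed.

Lemma nrm_ge0 f : Xs f -> 0 <= nrm f.
Proof. by case: HX => [_ [_ H _ _ _] _]; exact: H. Qed.

Lemma nrm_eq0 f : Xs f -> (nrm f = 0 <-> aeq mu f (fun => 0)).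
Proof. by case: HX => [_ [_ _ H _ _] _]; exact: H. Qed.

Lemma nrmZ a f : Xs f -> nrm (fun x => a * f x) = `|a| * nrm f.
Proof. by case: HX => [_ [_ _ _ H _] _]; exact: H. Qed.

Lemma nrm_triangle f g : Xs f -> Xs g -> nrm (fun x => f x + g x) <= nrm f + nrm g.
Proof. by case: HX => [_ [_ _ _ _ H] _]; exact: H. Qed.

Lemma nrmZ_ge0 a f : 0 <= a -> Xs f -> nrm (fun x => a * f x) = a * nrm f.
Proof. by move=> a0 Xf; rewrite nrmZ // ger0_norm. Qed.

Lemma nrm0 : nrm (fun => 0) = 0.
Proof. by apply/(nrm_eq0 mem0); apply: nearW. Qed.

Lemma nrmBC f g : Xs f -> Xs g -> nrm (fun x => f x - g x) = nrm (fun x => g x - f x).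
Proof.
move=> Xf Xg; have -> : (fun x => f x - g x) = (fun x => -1 * (g x - f x)).
  by apply: funext => x; rewrite mulN1r opprB.
by rewrite nrmZ ?normrN1 ?mul1r //; exact: memB.
Qed.

Lemma nrm_triangleB f g : Xs f -> Xs g -> nrm (fun x => f x - g x) <= nrm f + nrm g.
Proof.
move=> Xf Xg; have -> : (fun x => f x - g x) = (fun x => f x + -1 * g x).
  by apply: funext => x; rewrite mulN1r.
by apply: le_trans (nrm_triangle Xf (memZ (-1) Xg)) _; rewrite nrmZ // normrN1 mul1r.
Qed.

Lemma aeq_mem_nrm f g : Xs f -> L0 g -> aeq mu f g -> Xs g /\ nrm g = nrm f.
Proof.
case: HX => -[_ Xae _ _ _] [Nae _ _ _ _] _ Xf mg fg.
by have Xg := Xae f g Xf mg fg; split; last exact/esym/Nae.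
Qed.

Definition cauchy_seq (u : nat -> T -> R) := forall e : R, 0 < e ->
  exists N : nat, forall m n : nat, (N <= m)%N -> (N <= n)%N -> nrm (fun x => u m x - u n x) < e.

Lemma cauchy_halfpow (u : nat -> T -> R) c : (forall n, Xs (u n)) ->
  (forall n k, nrm (fun x => u (n + k)%N x - u n x) <= (2^-1) ^+ n * c) ->
  cauchy_seq u.
Proof.
move=> Xu uc e e0; have c1_gt0 : 0 < `|c| + 1 by rewrite ltr_pwDr.
have [N _ /= smallN] := cvgr0_norm_lt _ (@cvg_halfpow R) _ (divr_gt0 e0 c1_gt0).
have le_e p q : (N <= p)%N -> (p <= q)%N -> nrm (fun x => u q x - u p x) < e.
  move=> Np /subnKC <-; apply: le_lt_trans (uc _ _) _.
  have := smallN p Np; rewrite ger0_norm ?halfpow_ge0 // ltr_pdivlMr // => lt_e.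
  apply: le_lt_trans lt_e; apply: ler_wpM2l; first exact: halfpow_ge0.
  by rewrite (le_trans (ler_norm c)) // lerDl.
exists N => m n Nm Nn; case: (leqP n m) => nm; first exact: le_e.
by rewrite nrmBC //; exact: le_e (ltnW nm).
Qed.

Lemma nrm_le_of_cvg (u : nat -> T -> R) g M : (forall n, Xs (u n)) -> Xs g ->
  nrm (fun x => u n x - g x) @[n --> \oo] --> 0 -> (forall n, nrm (u n) <= M) ->
  nrm g <= M.
Proof.
move=> Xu Xg ug uM; apply/ler_addgt0Pr => e e0.
have [N _ /(_ N (leqnn N)) /=] := cvgr0_norm_lt _ ug _ e0.
rewrite ger0_norm; last exact/nrm_ge0/memB.
move=> small; have -> : g = fun x => u N x - (u N x - g x) by apply: funext => x; ring.
apply: le_trans (nrm_triangleB (Xu N) (memB (Xu N) Xg)) _.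
by apply: lerD => //; exact: ltW.
Qed.

Hypothesis HS : subsequence_property mu Xs nrm.

Lemma mem_pointwise_limit (u : nat -> T -> R) v M : (forall n, Xs (u n)) ->
  cauchy_seq u -> L0 v -> (forall x, u n x @[n --> \oo] --> v x) ->
  (forall n, nrm (u n) <= M) -> Xs v /\ nrm v <= M.
Proof.
move=> Xu u_cauchy mv uv uM; case: HX => _ _ /(_ u Xu u_cauchy) [g [Xg ug]].
have [phi [phiS u_phi_g]] := HS Xu Xg ug.
have gv : aeq mu g v.
  apply: filterS u_phi_g => x u_phi_gx; apply: (cvg_unique (@Rhausdorff R) u_phi_gx).
  exact: (cvg_comp phi (fun n => u n x) (cvg_increasing_nat phiS) (uv x)).
have [Xv ->] := aeq_mem_nrm Xg mv gv; split=> //.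
exact: nrm_le_of_cvg Xu Xg ug uM.
Qed.

Hypothesis HR : strictly_rectangular Xs nrm.

Lemma dyadic_partial_mul (s f : T -> R) n k : measurable_fun setT s -> Xs f ->
  Xs (fun x => (dyadic_rem s n x - dyadic_rem s (n + k) x) * f x) /\
  nrm (fun x => (dyadic_rem s n x - dyadic_rem s (n + k) x) * f x)
    <= ((2^-1) ^+ n - (2^-1) ^+ (n + k)) * nrm f.
Proof.
move=> ms Xf; elim: k => [|k [X_k N_k]].
  rewrite addn0; have -> : (fun x => (dyadic_rem s n x - dyadic_rem s n x) * f x) = fun => 0.
    by apply: funext => x; rewrite subrr mul0r.
  by rewrite subrr mul0r nrm0; split=> //; exact: mem0.
have [XA NA] := HR Xf (measurable_dyadic_set (n + k) ms).
set w := (2^-1 : R) ^+ (n + k).+1.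
have -> : (fun x => (dyadic_rem s n x - dyadic_rem s (n + k.+1) x) * f x) =
    (fun x => (dyadic_rem s n x - dyadic_rem s (n + k) x) * f x +
       w * (\1_(dyadic_set s (n + k)) x * f x)).
  by apply: funext => x; rewrite addnS dyadic_remS /w; ring.
split; first exact/memD/memZ.
apply: le_trans (nrm_triangle X_k (memZ _ XA)) _.
rewrite nrmZ_ge0 ?halfpow_ge0 //.
apply: le_trans (lerD N_k (ler_wpM2l (halfpow_ge0 _ _) NA)) _.
have halfS : w = (2^-1) ^+ (n + k) / 2 by rewrite /w exprSr.
rewrite addnS -/w -mulrDl ler_wpM2r ?nrm_ge0 //; lra.
Qed.

Lemma mul_unit_interval (s f : T -> R) : measurable_fun setT s ->
  (forall x, 0 <= s x <= 1) -> Xs f -> Xs (fun x => s x * f x) /\ nrm (fun x => s x * f x) <= nrm f.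
Proof.
move=> ms s01 Xf; pose u n x := (s x - dyadic_rem s n x) * f x.
have partial n k := dyadic_partial_mul n k ms Xf.
have Xu n : Xs (u n) by case: (partial 0%N n).
have u_le n : nrm (u n) <= nrm f.
  case: (partial 0%N n) => _ /le_trans; apply; rewrite ler_piMl ?nrm_ge0 //.
  by rewrite expr0 add0n lerBlDr lerDl halfpow_ge0.
have u_cauchy : cauchy_seq u.
  apply: (cauchy_halfpow (c := nrm f)) => // n k.
  have [_ N_nk] := partial n k.
  have -> : (fun x => u (n + k)%N x - u n x) =
      (fun x => (dyadic_rem s n x - dyadic_rem s (n + k) x) * f x).
    by apply: funext => x; rewrite /u; ring.
  by apply: le_trans N_nk _; rewrite ler_wpM2r ?nrm_ge0 // lerBlDr lerDl halfpow_ge0.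
apply: mem_pointwise_limit Xu u_cauchy _ _ u_le.
  exact/measurable_funM/mem_L0.
move=> x; rewrite -[s x]subr0; apply: cvgM; last exact: cvg_cst.
by apply: cvgB; [exact: cvg_cst | exact: cvg_dyadic_rem].
Qed.

Lemma mul_unit_interval_ae (s f : T -> R) : measurable_fun setT s ->
  (\forall x \ae mu, 0 <= s x <= 1) -> Xs f ->
  Xs (fun x => s x * f x) /\ nrm (fun x => s x * f x) <= nrm f.
Proof.
move=> ms s01 Xf; pose c := (s \max cst 0) \min cst 1.
have mc : measurable_fun setT c.
  by apply: measurable_minr; [apply: measurable_maxr |]; rewrite ?ms //; exact: measurable_cst.
have c01 x : 0 <= c x <= 1 by rewrite /c /= le_min ge_min le_max !lexx ler01 !orbT.
have [Xcf Ncf] := mul_unit_interval mc c01 Xf.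
have cs : aeq mu (fun x => c x * f x) (fun x => s x * f x).
  by apply: filterS s01 => x /andP[s0 s1]; rewrite /c /= (max_l s0) (min_l s1).
by have [Xsf ->] := aeq_mem_nrm Xcf (measurable_funM ms (mem_L0 Xf)) cs.
Qed.

Lemma mul_norm_le1 (s f : T -> R) : measurable_fun setT s ->
  (\forall x \ae mu, `|s x| <= 1) -> Xs f ->
  Xs (fun x => s x * f x) /\ nrm (fun x => s x * f x) <= 2 * nrm f.
Proof.
move=> ms s1 Xf; pose sp x := (`|s x| + s x) / 2; pose sn x := (`|s x| - s x) / 2.
have m_abs : measurable_fun setT (fun x => `|s x|) by exact: measurableT_comp ms.
have parts_01 x : `|s x| <= 1 -> 0 <= sp x <= 1 /\ 0 <= sn x <= 1.
  rewrite /sp /sn; have [s0 | s0] := lerP 0 (s x);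
    [rewrite ger0_norm // | rewrite ltr0_norm //] => sx1; split; apply/andP; split; lra.
have [Xp Np] := mul_unit_interval_ae (f := f) (s := sp)
  (measurable_funM (measurable_funD m_abs ms) (measurable_cst _))
  (filterS (fun x sx => proj1 (parts_01 x sx)) s1) Xf.
have [Xn Nn] := mul_unit_interval_ae (f := f) (s := sn)
  (measurable_funM (measurable_funB m_abs ms) (measurable_cst _))
  (filterS (fun x sx => proj2 (parts_01 x sx)) s1) Xf.
have -> : (fun x => s x * f x) = (fun x => sp x * f x - sn x * f x).
  by apply: funext => x; rewrite /sp /sn; field.
split; first exact: memB.
by apply: le_trans (nrm_triangleB Xp Xn) _; rewrite mulr2n mulrDl mul1r lerD.
Qed.

Lemma mem_dominated f g : L0 f -> Xs g -> ale mu (fun x => `|f x|) (fun x => `|g x|) ->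
  Xs f /\ nrm f <= 2 * nrm g.
Proof.
move=> mf Xg fg; have mfg := L0_div mf (mem_L0 Xg).
have [Xfgg Nfgg] := mul_norm_le1 mfg (filterS (fun x => @norm_div_le1 R _ _) fg) Xg.
by have [Xf ->] := aeq_mem_nrm Xfgg mf (filterS (fun x => @divfK_norm_le R _ _) fg).
Qed.

Lemma mem_monotone f g : L0 f -> Xs g -> ale mu (fun => 0) f -> ale mu f g ->
  Xs f /\ nrm f <= nrm g.
Proof.
move=> mf Xg f0 fg; have mfg := L0_div mf (mem_L0 Xg).
have f0g : \forall x \ae mu, 0 <= f x <= g x by apply: filterS2 f0 fg => x /= -> ->.
have fg01 : \forall x \ae mu, 0 <= f x / g x <= 1.
  exact: filterS (fun x => @div_unit_interval R _ _) f0g.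
have [Xfgg Nfgg] := mul_unit_interval_ae mfg fg01 Xg.
have fg_norm : \forall x \ae mu, `|f x| <= `|g x|.
  by apply: filterS f0g => x /andP[fx0 fgx]; rewrite !ger0_norm ?(le_trans fx0).
by have [Xf ->] := aeq_mem_nrm Xfgg mf (filterS (fun x => @divfK_norm_le R _ _) fg_norm).
Qed.

Lemma ale_abs_abs (f : T -> R) : ale mu (fun x => `| `|f x| |) (fun x => `|f x|).
Proof. by apply: nearW => x; rewrite normr_id. Qed.

Lemma mem_abs f : Xs f -> Xs (fun x => `|f x|).
Proof. by move=> Xf; case: (mem_dominated (L0_abs (mem_L0 Xf)) Xf (ale_abs_abs f)). Qed.

Lemma nrm_abs_le f : Xs f -> nrm (fun x => `|f x|) <= 2 * nrm f.
Proof. by move=> Xf; case: (mem_dominated (L0_abs (mem_L0 Xf)) Xf (ale_abs_abs f)). Qed.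

Lemma nrm_le_abs f : Xs f -> nrm f <= 2 * nrm (fun x => `|f x|).
Proof.
move=> Xf; have f_le : ale mu (fun x => `|f x|) (fun x => `| `|f x| |).
  by apply: nearW => x; rewrite normr_id.
by case: (mem_dominated (mem_L0 Xf) (mem_abs Xf) f_le).
Qed.

Lemma nrm_abs_le_of_ale f g : Xs f -> Xs g -> ale mu (fun x => `|f x|) g ->
  nrm (fun x => `|f x|) <= nrm g.
Proof.
move=> Xf Xg fg; have f0 : ale mu (fun => 0) (fun x => `|f x|) by apply: nearW => x.
by case: (mem_monotone (L0_abs (mem_L0 Xf)) Xg f0 fg).
Qed.

Lemma nrm_abs_nonneg f : Xs f -> ale mu (fun => 0) f -> nrm (fun x => `|f x|) = nrm f.
Proof.
move=> Xf f0; have f_abs : aeq mu f (fun x => `|f x|).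
  by apply: filterS f0 => x /ger0_norm.
by case: (aeq_mem_nrm Xf (L0_abs (mem_L0 Xf)) f_abs).
Qed.

Lemma nrm_dist_abs_le g h : Xs g -> Xs h ->
  nrm (fun x => `|g x| - `|h x|) <= 2 * nrm (fun x => g x - h x).
Proof.
move=> Xg Xh; have dist_le : ale mu (fun x => `| `|g x| - `|h x| |) (fun x => `|g x - h x|).
  by apply: nearW => x; exact: ler_dist_dist.
have m_dist : L0 (fun x => `|g x| - `|h x|).
  by apply: measurable_funB; apply/L0_abs/mem_L0.
by case: (mem_dominated m_dist (memB Xg Xh) dist_le).
Qed.

Lemma ideal_mem : ideal_L0 mu Xs.
Proof. by move=> f g mf Xg fg; case: (mem_dominated mf Xg fg). Qed.

Lemma monotone_with1 : monotone_with mu Xs nrm 1.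
Proof.
by move=> f g Xf Xg f0 fg; rewrite mul1r; case: (mem_monotone (mem_L0 Xf) Xg f0 fg).
Qed.

Lemma Linf_mul h f : Linf mu h -> Xs f ->
  [/\ Xs (fun x => h x * f x),
      nrm (fun x => `|h x * f x|) <= Linf_norm mu h * nrm (fun x => `|f x|) &
      nrm (fun x => h x * f x) <= 4 * Linf_norm mu h * nrm f].
Proof.
move=> Lh Xf; have [M0 hM] := Linf_norm_bound Lh; set M := Linf_norm mu h in M0 hM *.
have hf_le : ale mu (fun x => `|h x * f x|) (fun x => M * `|f x|).
  by apply: filterS hM => x hx; rewrite normrM ler_wpM2r.
have hf_dom : ale mu (fun x => `|h x * f x|) (fun x => `|M * f x|).
  by apply: filterS hf_le => x; rewrite (normrM M) (ger0_norm M0).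
have [Xhf _] := mem_dominated (measurable_funM Lh.1 (mem_L0 Xf)) (memZ M Xf) hf_dom.
have abs_le : nrm (fun x => `|h x * f x|) <= M * nrm (fun x => `|f x|).
  rewrite -nrmZ_ge0 //; last exact: mem_abs.
  exact: nrm_abs_le_of_ale Xhf (memZ M (mem_abs Xf)) hf_le.
split=> //; apply: le_trans (nrm_le_abs Xhf) _.
have := nrm_abs_le Xf; have := nrm_ge0 (mem_abs Xf); nra.
Qed.

(* Monotonicity applied to f = g = |g - h| forces C >= 1, unless |g - h| has
   norm zero, in which case both sides vanish. *)
Lemma nrm_dist_abs_le_monotone C : monotone_with mu Xs nrm C -> forall g h, Xs g -> Xs h ->
  nrm (fun x => `|g x| - `|h x|) <= 4 * C * nrm (fun x => g x - h x).
Proof.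
move=> monoC g h Xg Xh; have Xgh := memB Xg Xh; have Xk := mem_abs Xgh.
have k_le : nrm (fun x => `|g x - h x|) <= C * nrm (fun x => `|g x - h x|).
  by apply: monoC => //; apply: nearW => x.
have := nrm_dist_abs_le Xg Xh; have := nrm_le_abs Xgh.
have := nrm_ge0 Xk; have := nrm_ge0 Xgh; move: k_le.
set L := nrm (fun x => `|g x| - `|h x|); set N := nrm (fun x => g x - h x).
set K := nrm (fun x => `|g x - h x|) => k_le N0 K0 NK LN.
have [C1 | C1] := lerP 1 C.
  by apply: le_trans LN _; rewrite ler_wpM2r //; lra.
have K_eq0 : K = 0 by apply/eqP; rewrite eq_le K0 andbT; nra.
have N_eq0 : N = 0 by lra.
by rewrite N_eq0 mulr0; lra.
Qed.

Lemma continuous_abs f : Xs f -> forall e : R, 0 < e -> exists2 del : R, 0 < del &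
  forall g, Xs g -> nrm (fun x => g x - f x) < del -> nrm (fun x => `|g x| - `|f x|) < e.
Proof.
move=> Xf e e0; exists (e / 2); first by rewrite divr_gt0.
by move=> g Xg gf; have := nrm_dist_abs_le Xg Xf; lra.
Qed.

Lemma is_norm_on_abs : is_norm_on mu Xs (fun f => nrm (fun x => `|f x|)).
Proof.
split.
- move=> f g Xf Xg fg; have abs_fg : aeq mu (fun x => `|f x|) (fun x => `|g x|).
    by apply: filterS fg => x /= ->.
  by case: (aeq_mem_nrm (mem_abs Xf) (L0_abs (mem_L0 Xg)) abs_fg).
- by move=> f Xf; exact/nrm_ge0/mem_abs.
- move=> f Xf; rewrite (nrm_eq0 (mem_abs Xf)).
  split; apply: filterS => x /=; first by move/normr0_eq0.
  by move=> ->; rewrite normr0.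
- move=> a f Xf; under eq_fun do rewrite normrM.
  by rewrite nrmZ_ge0 //; exact: mem_abs.
- move=> f g Xf Xg; apply: le_trans (nrm_triangle (mem_abs Xf) (mem_abs Xg)).
  apply: nrm_abs_le_of_ale (memD Xf Xg) (memD (mem_abs Xf) (mem_abs Xg)) _.
  by apply: nearW => x; exact: ler_normD.
Qed.

Lemma complete_for_abs : complete_for Xs (fun f => nrm (fun x => `|f x|)).
Proof.
move=> u Xu u_cauchy; have [|f [Xf uf]] := (let: And3 _ _ HC := HX in HC) u Xu.
  move=> e e0; have [N uN] := u_cauchy (e / 2) (divr_gt0 e0 (ltr0n _ 2)).
  exists N => m n Nm Nn; have := nrm_le_abs (memB (Xu m) (Xu n)).
  by have := uN m n Nm Nn; lra.
exists f; split=> //.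
have two_uf : 2 * nrm (fun x => u n x - f x) @[n --> \oo] --> 0.
  by rewrite -(mulr0 2); apply: cvgM => //; exact: cvg_cst.
apply: (squeeze_cvgr _ (cvg_cst 0) two_uf); apply: nearW => n.
have Xuf := memB (Xu n) Xf.
by rewrite nrm_abs_le ?nrm_ge0 //; exact: mem_abs.
Qed.

Lemma riesz_norm_abs : riesz_norm mu Xs (fun f => nrm (fun x => `|f x|)).
Proof. by move=> f g Xf Xg; apply: nrm_abs_le_of_ale Xf (mem_abs Xg). Qed.

Lemma banach_function_space_abs :
  banach_function_space mu Xs (fun f => nrm (fun x => `|f x|)).
Proof.
split; [split | exact: ideal_mem | exact: riesz_norm_abs].
- by case: HX.
- exact: is_norm_on_abs.
- exact: complete_for_abs.
Qed.

End StrictlyRectangularSpace.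

Theorem theorem3p7 (d : measure_display) (T : measurableType d) (R : realType)
    (mu : {measure set T -> \bar R}) (Xs : set (T -> R)) (nrm : (T -> R) -> R) :
  (mu [set: T] < +oo)%E ->
  banach_strictly_rectangular mu Xs nrm ->
  subsequence_property mu Xs nrm ->
  (* (i) *)
  (forall h f, Linf mu h -> Xs f ->
     [/\ Xs (fun x => h x * f x),
         nrm (fun x => `|h x * f x|) <= Linf_norm mu h * nrm (fun x => `|f x|) &
         nrm (fun x => h x * f x) <= 4 * Linf_norm mu h * nrm f])
  (* (ii) *)
  /\ ideal_L0 mu Xs
  (* (iii) *)
  /\ [/\ exists C : R, 0 < C /\ monotone_with mu Xs nrm C,
         forall C : R, 0 < C -> monotone_with mu Xs nrm C ->
           forall g h, Xs g -> Xs h ->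
             nrm (fun x => `|g x| - `|h x|) <= 4 * C * nrm (fun x => g x - h x) &
         forall f, Xs f -> forall e : R, 0 < e -> exists2 del : R, 0 < del &
           forall g, Xs g -> nrm (fun x => g x - f x) < del ->
             nrm (fun x => `|g x| - `|f x|) < e]
  (* (iv) *)
  /\ [/\ is_norm_on mu Xs (fun f => nrm (fun x => `|f x|)),
         exists c1 c2 : R, [/\ 0 < c1, 0 < c2 & forall f, Xs f ->
           nrm (fun x => `|f x|) <= c1 * nrm f /\ nrm f <= c2 * nrm (fun x => `|f x|)],
         (forall f, Xs f -> ale mu (fun _ => 0) f -> nrm (fun x => `|f x|) = nrm f) &
         banach_function_space mu Xs (fun f => nrm (fun x => `|f x|))].
Proof.
move=> _ [HX HR] HS.
split; first exact: (Linf_mul HX HS HR).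
split; first exact: (ideal_mem HX HS HR).
split; first split.
- by exists 1; split=> //; exact: (monotone_with1 HX HS HR).
- by move=> C _; exact: (nrm_dist_abs_le_monotone HX HS HR).
- exact: (continuous_abs HX HS HR).
split.
- exact: (is_norm_on_abs HX HS HR).
- exists 2, 2; split=> // f Xf.
  by split; [exact: (nrm_abs_le HX HS HR) | exact: (nrm_le_abs HX HS HR)].
- exact: (nrm_abs_nonneg HX).
- exact: (banach_function_space_abs HX HS HR).
Qed.
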